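(* Let $A$ be an evolution algebra with natural basis $B=\{e_i:i\in\Lambda\}$ and structure matrix $(\omega_{ki})$, and let $M$ be a modular ideal of $A$ with support $\Lambda_M$. Then: (i) for each $i\in\Lambda$, $e_i\in M$ if and only if $e_i^2\in M$; (ii) $M=\mathrm{lin}\{e_i:i\in\Lambda_M\}$; consequently $M$ is proper if and only if $\Lambda_M\neq\Lambda$; (iii) $\Lambda\setminus\Lambda_M$ is finite, and if $u$ is any modular unit for $M$ then $\Lambda_M\cup\Lambda_u=\Lambda$; (iv) if $M$ is proper, then $\omega_{ii}\neq 0$ for every $i\in\Lambda\setminus\Lambda_M$, the element $u_0=\sum_{i\in\Lambda\setminus\Lambda_M}\frac{1}{\omega_{ii}}e_i$ is a modular unit for $M$, and an element $u\in A$ is a modular unit for $M$ if and only if $u=m+u_0$ for some $m\in M$.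
   Context: An evolution algebra is an algebra $A$ over $\mathbb{K}\in\{\mathbb{R},\mathbb{C}\}$ with a basis $B=\{e_i:i\in\Lambda\}$ (natural basis) such that $e_ie_j=0$ for $i\neq j$; write $e_i^2=\sum_k\omega_{ki}e_k$. For $a=\sum_i\alpha_ie_i$, its support is $\Lambda_a=\{i:\alpha_i\neq 0\}$; for a nonempty $S\subseteq A$, $\Lambda_S=\bigcup_{a\in S}\Lambda_a$. An ideal $M$ of the (commutative) algebra $A$ is modular if there exists $u\in A$ (a modular unit for $M$) with $a-au\in M$ for all $a\in A$. *)

(* Evolution algebras with an arbitrary (possibly infinite)
   natural basis indexed by I; elements of A are finitely supported
   coordinate functions I -> K. *)
From HB Require Import structures.
From mathcomp Require Import all_boot all_order all_algebra.
From Stdlib Require Import ClassicalEpsilon.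
Set Implicit Arguments. Unset Strict Implicit. Unset Printing Implicit Defensive.
Import Order.TTheory GRing.Theory Num.Theory.
Local Open Scope ring_scope.

Section Evo.
Variables (K : fieldType) (I : eqType).

Definition evo_elem (a : I -> K) : Prop :=
  exists s : seq I, forall i, a i != 0 -> i \in s.

Definition supp_seq (a : I -> K) : seq I :=
  epsilon (inhabits [::]) (fun s : seq I => uniq s /\ forall i, a i != 0 -> i \in s).

Definition ebasis (j : I) : I -> K := fun i => if i == j then 1 else 0.

Definition evo_add (a b : I -> K) : I -> K := fun i => a i + b i.
Definition evo_sub (a b : I -> K) : I -> K := fun i => a i - b i.
Definition evo_scale (c : K) (a : I -> K) : I -> K := fun i => c * a i.

(* evolution product with structure matrix om: e_i^2 = sum_k om k i e_k,
   e_i e_j = 0 for i <> j, extended bilinearly *)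
Definition evo_mul (om : I -> I -> K) (a b : I -> K) : I -> K :=
  fun k => \sum_(i <- supp_seq a) om k i * (a i * b i).

Definition structure_matrix (om : I -> I -> K) : Prop :=
  forall i, evo_elem (fun k => om k i).

Definition evo_ideal (om : I -> I -> K) (M : (I -> K) -> Prop) : Prop :=
  [/\ forall a, M a -> evo_elem a,
      M (fun _ => 0),
      forall a b, M a -> M b -> M (evo_add a b),
      forall c a, M a -> M (evo_scale c a)
    & forall a m, evo_elem a -> M m -> M (evo_mul om a m) /\ M (evo_mul om m a)].

Definition evo_modular_unit (om : I -> I -> K) (M : (I -> K) -> Prop) (u : I -> K) :=
  evo_elem u /\ forall a, evo_elem a -> M (evo_sub a (evo_mul om a u)).

Definition evo_modular_ideal om M := evo_ideal om M /\ exists u, evo_modular_unit om M u.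

Definition evo_supp (M : (I -> K) -> Prop) (i : I) : Prop := exists a, M a /\ a i != 0.

Definition evo_lin (S : I -> Prop) (a : I -> K) : Prop :=
  exists (s : seq I) (c : I -> K), (forall i, i \in s -> S i) /\
    a = (fun k => \sum_(i <- s) c i * ebasis i k).

Definition evo_proper (M : (I -> K) -> Prop) : Prop :=
  exists a, evo_elem a /\ ~ M a.

End Evo.

From HB Require Import structures.
From mathcomp Require Import all_boot all_order all_algebra.
From mathcomp Require Import ring.
From Stdlib Require Import ClassicalEpsilon Classical FunctionalExtensionality.
Import Order.TTheory GRing.Theory Num.Theory.
Set Implicit Arguments. Unset Strict Implicit. Unset Printing Implicit Defensive.
Local Open Scope ring_scope.

(* Multiplying an element m of M by e_i gives m_i e_i^2, so e_i^2 is in M as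
   soon as i is in the support of M; and a modular unit u gives
   e_i - u_i e_i^2 in M, so then e_i is in M too.  Hence M is exactly the span
   of the e_i with i in its support.  Off the support, e_i - u_i e_i^2 can only
   lie in M if its i-th coordinate 1 - om_ii u_i vanishes: this pins down every
   modular unit outside the support, and shows that any two of them differ by
   an element of M. *)

Lemma sum_seq_delta (K : fieldType) (I : eqType) (s : seq I) (G : I -> K) j :
  uniq s -> (G j != 0 -> j \in s) ->
  \sum_(i <- s) (if i == j then G i else 0) = G j.
Proof.
move=> s_uniq sGj; rewrite -big_mkcond.
have [js|njs] := boolP (j \in s).
  by rewrite -big_filter filter_pred1_uniq // big_seq1.
have /eqP -> : G j == 0 by exact: contraNT sGj njs.
by rewrite big1_seq // => i /andP[/eqP -> ij]; rewrite ij in njs.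
Qed.

Section EvolutionAlgebra.
Variables (K : fieldType) (I : eqType) (om : I -> I -> K).

Lemma supp_seqP (a : I -> K) : evo_elem a ->
  uniq (supp_seq a) /\ (forall i, a i != 0 -> i \in supp_seq a).
Proof.
move=> [s sa].
have covering : exists t : seq I, uniq t /\ (forall i, a i != 0 -> i \in t).
  by exists (undup s); split=> [|i /sa]; rewrite ?undup_uniq ?mem_undup.
exact: epsilon_spec covering.
Qed.

Lemma ebasis_elem (i : I) : evo_elem (ebasis K i).
Proof. by exists [:: i] => j; rewrite inE /ebasis; case: (j == i); rewrite ?eqxx. Qed.

Lemma evo_elem_sub (a b : I -> K) :
  evo_elem a -> evo_elem b -> evo_elem (evo_sub a b).
Proof.
move=> [s sa] [t tb]; exists (s ++ t) => i; rewrite mem_cat /evo_sub.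
have [->|/sa -> //] := eqVneq (a i) 0.
by rewrite sub0r oppr_eq0 => /tb ->; rewrite orbT.
Qed.

Lemma evo_elem_add (a b : I -> K) :
  evo_elem a -> evo_elem b -> evo_elem (evo_add a b).
Proof.
move=> [s sa] [t tb]; exists (s ++ t) => i; rewrite mem_cat /evo_add.
have [->|/sa -> //] := eqVneq (a i) 0.
by rewrite add0r => /tb ->; rewrite orbT.
Qed.

Lemma evo_elem_expansion (a : I -> K) : evo_elem a ->
  a = fun k => \sum_(i <- [seq i <- supp_seq a | a i != 0]) a i * ebasis K i k.
Proof.
move=> /supp_seqP[a_uniq sa]; apply: functional_extensionality => k.
rewrite (eq_bigr (fun i => if i == k then a i else 0)).
  by rewrite sum_seq_delta ?filter_uniq // => ak; rewrite mem_filter ak sa.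
by move=> i _; rewrite /ebasis (eq_sym k i); case: (i == k); rewrite ?mulr1 ?mulr0.
Qed.

Lemma evo_mul_ebasisl (i : I) (b : I -> K) :
  evo_mul om (ebasis K i) b = fun k => om k i * b i.
Proof.
apply: functional_extensionality => k.
have [e_uniq se] := supp_seqP (ebasis_elem i).
rewrite /evo_mul (eq_bigr (fun j => if j == i then om k j * b j else 0)).
  by rewrite sum_seq_delta // => _; apply: se; rewrite /ebasis eqxx oner_neq0.
by move=> j _; rewrite /ebasis; case: (j == i); rewrite ?mul1r ?mul0r ?mulr0.
Qed.

Lemma evo_mul_ebasis_sqr (i : I) :
  evo_mul om (ebasis K i) (ebasis K i) = fun k => om k i.
Proof.
rewrite evo_mul_ebasisl; apply: functional_extensionality => k.
by rewrite /ebasis eqxx mulr1.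
Qed.

Lemma evo_mul_subr (a b c : I -> K) :
  evo_mul om a (evo_sub b c) = evo_sub (evo_mul om a b) (evo_mul om a c).
Proof.
apply: functional_extensionality => k; rewrite /evo_mul /evo_sub -sumrB.
by apply: eq_bigr => i _; ring.
Qed.

Section ModularIdeal.
Variables (M : (I -> K) -> Prop) (u : I -> K).
Hypothesis u_unit : evo_modular_unit om M u.

Lemma ebasis_residual_in_ideal (i : I) : M (fun k => ebasis K i k - om k i * u i).
Proof. by have := u_unit.2 _ (ebasis_elem i); rewrite evo_mul_ebasisl. Qed.

Lemma modular_unit_off_supp (i : I) : ~ evo_supp M i -> om i i * u i = 1.
Proof.
move=> i_out; apply/eqP; rewrite eq_sym -subr_eq0; apply: contraT => residual_i.
case: i_out; exists (fun k => ebasis K i k - om k i * u i).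
by split; [exact: ebasis_residual_in_ideal | rewrite /ebasis eqxx].
Qed.

Lemma modular_unit_off_supp_neq0 (i : I) :
  ~ evo_supp M i -> om i i != 0 /\ u i != 0.
Proof.
move=> /modular_unit_off_supp om_u_1.
have : om i i * u i != 0 by rewrite om_u_1 oner_eq0.
by rewrite mulf_eq0 negb_or => /andP.
Qed.

Lemma modular_unit_off_suppE (i : I) : ~ evo_supp M i -> u i = (om i i)^-1.
Proof.
move=> i_out; have [om_neq0 _] := modular_unit_off_supp_neq0 i_out.
by rewrite -[(om i i)^-1]mulr1 -(modular_unit_off_supp i_out) mulKf.
Qed.

Hypothesis M_ideal : evo_ideal om M.

Lemma ideal_lin (S : I -> Prop) (a : I -> K) :
  (forall i, S i -> M (ebasis K i)) -> evo_lin S a -> M a.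
Proof.
case: M_ideal => _ M0 MD MZ _ SM [s [c [sS ->]]].
elim: s sS => [|j s IHs] sS.
  by congr M: M0; apply: functional_extensionality => k; rewrite big_nil.
rewrite (_ : (fun k => _) = evo_add (evo_scale (c j) (ebasis K j))
                                    (fun k => \sum_(i <- s) c i * ebasis K i k)).
  by apply: MD; [apply/MZ/SM/sS/mem_head | apply: IHs => i si; apply/sS/mem_behead].
by apply: functional_extensionality => k; rewrite big_cons.
Qed.

Lemma ideal_supp_ebasis_sqr (i : I) : evo_supp M i -> M (fun k => om k i).
Proof.
case: M_ideal => _ _ _ MZ MM [m [Mm mi]].
have := MZ (m i)^-1 _ (MM _ _ (ebasis_elem i) Mm).1.
rewrite evo_mul_ebasisl; congr M; apply: functional_extensionality => k.
by rewrite /evo_scale mulrCA mulVf // mulr1.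
Qed.

Lemma ideal_ebasis_sqrE (i : I) :
  M (ebasis K i) <-> M (evo_mul om (ebasis K i) (ebasis K i)).
Proof.
case: M_ideal => _ _ MD MZ MM; split; first by move/(MM _ _ (ebasis_elem i))=> [].
rewrite evo_mul_ebasis_sqr => Msqr.
have := MD _ _ (ebasis_residual_in_ideal i) (MZ (u i) _ Msqr).
by congr M; apply: functional_extensionality => k; rewrite /evo_add /evo_scale; ring.
Qed.

Lemma supp_ebasis_in_ideal (i : I) : evo_supp M i -> M (ebasis K i).
Proof.
by move/ideal_supp_ebasis_sqr; rewrite -evo_mul_ebasis_sqr => /ideal_ebasis_sqrE.
Qed.

Lemma ideal_linE (a : I -> K) : M a <-> evo_lin (evo_supp M) a.
Proof.
split; last exact: ideal_lin supp_ebasis_in_ideal.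
case: M_ideal => M_elem _ _ _ _ Ma.
exists [seq i <- supp_seq a | a i != 0], a; split; last first.
  exact/evo_elem_expansion/M_elem.
by move=> i; rewrite mem_filter => /andP[ai _]; exists a.
Qed.

Lemma ideal_of_supp (a : I -> K) :
  evo_elem a -> (forall i, a i != 0 -> evo_supp M i) -> M a.
Proof.
move=> a_elem a_supp; apply/ideal_linE.
exists [seq i <- supp_seq a | a i != 0], a; split; last exact: evo_elem_expansion.
by move=> i; rewrite mem_filter => /andP[/a_supp].
Qed.

Lemma ideal_properE : evo_proper M <-> exists i, ~ evo_supp M i.
Proof.
split.
  move=> [a [a_elem Mna]]; apply: NNPP => all_supp; apply/Mna/ideal_of_supp => // i _.
  by apply: NNPP => ni; apply: all_supp; exists i.
move=> [i ni]; exists (ebasis K i); split; first exact: ebasis_elem.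
by move=> Me; apply: ni; exists (ebasis K i); rewrite /ebasis eqxx oner_eq0.
Qed.

Lemma ideal_sub_of_agree_off_supp (a b : I -> K) :
  evo_elem a -> evo_elem b -> (forall i, ~ evo_supp M i -> a i = b i) ->
  M (evo_sub a b).
Proof.
move=> a_elem b_elem ab; apply: ideal_of_supp; first exact: evo_elem_sub.
move=> k; rewrite /evo_sub subr_eq0 => /eqP abk.
by apply: NNPP => /ab.
Qed.

Lemma modular_unit_of_sub (w : I -> K) :
  evo_elem w -> M (evo_sub w u) -> evo_modular_unit om M w.
Proof.
case: M_ideal => _ _ MD MZ MM w_elem Mwu; split=> // a a_elem.
have -> : evo_sub a (evo_mul om a w) =
    evo_add (evo_sub a (evo_mul om a u)) (evo_scale (-1) (evo_mul om a (evo_sub w u))).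
  rewrite evo_mul_subr; apply: functional_extensionality => k.
  by rewrite /evo_add /evo_sub /evo_scale; ring.
apply: MD; first exact: u_unit.2.
by apply/MZ; case: (MM _ _ a_elem Mwu).
Qed.

End ModularIdeal.

End EvolutionAlgebra.

Theorem theorem3p2 (K : fieldType) (I : eqType) (om : I -> I -> K)
  (M : (I -> K) -> Prop) :
  structure_matrix om -> evo_modular_ideal om M ->
  (* (i) *)
  (forall i, M (ebasis K i) <-> M (evo_mul om (ebasis K i) (ebasis K i))) /\
  (* (ii) *)
  (forall a, M a <-> evo_lin (evo_supp M) a) /\
  (evo_proper M <-> exists i, ~ evo_supp M i) /\
  (* (iii) *)
  (exists s : seq I, forall i, ~ evo_supp M i -> i \in s) /\
  (forall u, evo_modular_unit om M u -> forall i, evo_supp M i \/ u i != 0) /\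
  (* (iv) *)
  (evo_proper M ->
     (forall i, ~ evo_supp M i -> om i i != 0) /\
     forall u0 : I -> K,
       (forall i, evo_supp M i -> u0 i = 0) ->
       (forall i, ~ evo_supp M i -> u0 i = (om i i)^-1) ->
       evo_modular_unit om M u0 /\
       (forall u, evo_modular_unit om M u <->
                  exists m, M m /\ u = evo_add m u0)).
Proof.
move=> _ [M_ideal [u u_unit]]; have [M_elem _ _ _ _] := M_ideal.
have u_off := modular_unit_off_supp_neq0 u_unit.
split; first exact: ideal_ebasis_sqrE u_unit M_ideal.
split; first exact: ideal_linE u_unit M_ideal.
split; first exact: ideal_properE u_unit M_ideal.
split; first by have [s su] := u_unit.1; exists s => i /u_off[_ /su].
split.
  move=> v v_unit i; have [|i_out] := classic (evo_supp M i); first by left.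
  by right; have [] := modular_unit_off_supp_neq0 v_unit i_out.
move=> _; split=> [i /u_off[] // | u0 u0_supp u0_off].
have u0_elem : evo_elem u0.
  have [s su] := u_unit.1; exists s => i u0i; apply: su.
  have [/u0_supp u0i0|/u_off[] //] := classic (evo_supp M i).
  by rewrite u0i0 eqxx in u0i.
have unit_sub_u0 v : evo_modular_unit om M v -> M (evo_sub v u0).
  move=> v_unit; apply: (ideal_sub_of_agree_off_supp u_unit M_ideal v_unit.1 u0_elem).
  by move=> i i_out; rewrite (modular_unit_off_suppE v_unit i_out) ?u0_off.
have u0_unit : evo_modular_unit om M u0.
  apply: (modular_unit_of_sub u_unit M_ideal u0_elem).
  apply: (ideal_sub_of_agree_off_supp u_unit M_ideal u0_elem u_unit.1).
  by move=> i i_out; rewrite u0_off // (modular_unit_off_suppE u_unit i_out).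
split=> // v; split.
  move=> v_unit; exists (evo_sub v u0); split; first exact: unit_sub_u0.
  by apply: functional_extensionality => k; rewrite /evo_add /evo_sub subrK.
move=> [m [Mm ->]]; apply: (modular_unit_of_sub u0_unit M_ideal).
  exact: evo_elem_add (M_elem _ Mm) u0_elem.
congr M: Mm; apply: functional_extensionality => k.
by rewrite /evo_sub /evo_add addrK.
Qed.
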